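(* Suppose the population EM operator $M$ is contractive with parameter $\kappa\in(0,1)$ on $\mathbb{B}_2(r;\theta^* )$, i.e. $\|M(\theta)-\theta^*\|_2\le\kappa\|\theta-\theta^*\|_2$ for all $\theta\in\mathbb{B}_2(r;\theta^* )$, and the initial vector $\theta^0$ belongs to $\mathbb{B}_2(r;\theta^* )$. Let $\delta\in(0,1)$. (a) If $n$ is such that $\epsilon^M_{\mathrm{unif}}(n,\delta)\le(1-\kappa)r$, then the EM iterates $\theta^{t+1}=M_n(\theta^t)$ (all $n$ samples used at each step) satisfy, with probability at least $1-\delta$, for all $t\ge 0$, $$\|\theta^t-\theta^*\|_2\le\kappa^t\|\theta^0-\theta^*\|_2+\frac{1}{1-\kappa}\,\epsilon^M_{\mathrm{unif}}(n,\delta).$$ (b) Fix an iteration number $T$ and suppose $\epsilon^M(n/T,\delta/T)\le(1-\kappa)r$. Split the $n$ samples into $T$ disjoint subsets of size $n/T$ and define the sample-splitting iterates $\theta^{t+1}=M_{n/T}(\theta^t)$, where the $(t+1)$-th update uses the $(t+1)$-th subset (fresh samples). Then, with probability at least $1-\delta$, for all $t\in\{0,1,\dots,T\}$, $$\|\theta^t-\theta^*\|_2\le\kappa^t\|\theta^0-\theta^*\|_2+\frac{1}{1-\kappa}\,\epsilon^M\Big(\frac{n}{T},\frac{\delta}{T}\Big).$$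
   Context: Setting: $(Y,Z)$ is a pair of random variables (observed $Y$, latent $Z$) with joint density $f_{\theta^*}$ from a family $\{f_\theta:\theta\in\Omega\}$, $\Omega\subseteq\mathbb{R}^d$ nonempty compact convex; $g_\theta(y)=\int f_\theta(y,z)dz$; $k_\theta(z\mid y)$ is the conditional density of $Z$ given $Y=y$. The population $Q$-function is $Q(\theta'\mid\theta)=\int(\int k_\theta(z\mid y)\log f_{\theta'}(y,z)dz)g_{\theta^*}(y)dy$ and the population EM operator is $M(\theta)=\arg\max_{\theta'\in\Omega}Q(\theta'\mid\theta)$. Given i.i.d. samples $y_1,\dots,y_n$ from $g_{\theta^*}$, the sample $Q$-function is $\widehat Q_n(\theta'\mid\theta)=\frac1n\sum_{i=1}^n\int k_\theta(z\mid y_i)\log f_{\theta'}(y_i,z)dz$ and the sample EM operator is $M_n(\theta)=\arg\max_{\theta'\in\Omega}\widehat Q_n(\theta'\mid\theta)$ (assumed well defined). $\mathbb{B}_2(r;\theta^* )=\{\theta\in\Omega:\|\theta-\theta^*\|_2\le r\}$. For sample size $n$ and $\delta\in(0,1)$: $\epsilon^M(n,\delta)$ is the smallest scalar such that for every fixed $\theta\in\mathbb{B}_2(r;\theta^* )$, $\|M_n(\theta)-M(\theta)\|_2\le\epsilon^M(n,\delta)$ with probability at least $1-\delta$; $\epsilon^M_{\mathrm{unif}}(n,\delta)$ is the smallest scalar such that $\sup_{\theta\in\mathbb{B}_2(r;\theta^* )}\|M_n(\theta)-M(\theta)\|_2\le\epsilon^M_{\mathrm{unif}}(n,\delta)$ with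 probability at least $1-\delta$. *)

From HB Require Import structures.
From mathcomp Require Import all_boot all_order all_algebra.
From mathcomp Require Import all_classical all_reals all_analysis.
Set Implicit Arguments. Unset Strict Implicit. Unset Printing Implicit Defensive.
Import Order.TTheory GRing.Theory Num.Theory.
Import numFieldNormedType.Exports.
Local Open Scope classical_set_scope.
Local Open Scope ring_scope.

Section EMDefs.
Variable R : realType.
Variable d : nat.

Definition norm2 (v : 'rV[R]_d) : R := Num.sqrt (\sum_(i < d) v ord0 i ^+ 2).

Definition ball2 (Om : set 'rV[R]_d) (r : R) (ts : 'rV[R]_d) : set 'rV[R]_d :=
  [set th | Om th /\ norm2 (th - ts) <= r].

(* conversions used to state measurability in the parameter *)
Definition rv2t (v : 'rV[R]_d) : d.-tuple R := [tuple v ord0 i | i < d].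
Definition t2rv (t : d.-tuple R) : 'rV[R]_d := \row_i tnth t i.

Section Model.
Context {dY dZ : measure_display} {Y : measurableType dY} {Z : measurableType dZ}.
Variables (muY : {measure set Y -> \bar R}) (muZ : {measure set Z -> \bar R}).
(* f theta y z : joint density of (Y,Z) w.r.t. muY (x) muZ *)
Variable f : 'rV[R]_d -> Y -> Z -> R.

Definition is_density_family : Prop :=
  forall th, (forall y z, 0 <= f th y z) /\
    measurable_fun [set: Y * Z] (fun p => f th p.1 p.2) /\
    (\int[muY]_y \int[muZ]_z (f th y z)%:E = 1)%E.

Definition gdens (th : 'rV[R]_d) (y : Y) : \bar R := (\int[muZ]_z (f th y z)%:E)%E.

Definition kdens (th : 'rV[R]_d) (z : Z) (y : Y) : R := f th y z / fine (gdens th y).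

Definition inner (th' th : 'rV[R]_d) (y : Y) : \bar R :=
  (\int[muZ]_z ((kdens th z y)%:E * lne (f th' y z)%:E))%E.

Definition Qfun (ts th' th : 'rV[R]_d) : \bar R :=
  (\int[muY]_y (inner th' th y * gdens ts y))%E.

Definition Qhat m (ys : m.-tuple Y) (th' th : 'rV[R]_d) : \bar R :=
  ((m%:R^-1)%:E * \sum_(i < m) inner th' th (tnth ys i))%E.

Definition is_argmax (Om : set 'rV[R]_d) (F : 'rV[R]_d -> \bar R) x : Prop :=
  Om x /\ forall y, Om y -> (F y <= F x)%E.
End Model.

Section Sampling.
Context {dT dY : measure_display} {T : measurableType dT} {Y : measurableType dY}.
Variable P : probability T R.

Definition iid_with_density (muY : {measure set Y -> \bar R}) (g : Y -> \bar R)
  (X : nat -> T -> Y) : Prop :=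
  (forall i, measurable_fun [set: T] (X i)) /\
  (forall i A, measurable A -> P (X i @^-1` A) = (\int[muY]_(y in A) g y)%E) /\
  (forall n (A : 'I_n -> set Y), (forall i, measurable (A i)) ->
     P (\bigcap_(i in [set: 'I_n]) (X i @^-1` A i)) =
     (\prod_(i < n) fine (P (X i @^-1` A i)))%:E).

Definition block (X : nat -> T -> Y) (s m : nat) (w : T) : m.-tuple Y :=
  [tuple X (s + i)%N w | i < m].

Variables (X : nat -> T -> Y) (Om : set 'rV[R]_d) (r : R) (ts : 'rV[R]_d).
Variables (M : 'rV[R]_d -> 'rV[R]_d) (Mn : forall m, m.-tuple Y -> 'rV[R]_d -> 'rV[R]_d).

Definition wp_atleast (p : R) (E : T -> Prop) : Prop :=
  exists A, measurable A /\ (p%:E <= P A)%E /\ forall w, A w -> E w.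

Definition epsM (n : nat) (delta : R) : \bar R :=
  ereal_inf [set e%:E | e in [set e : R | forall th, ball2 Om r ts th ->
    wp_atleast (1 - delta)
      (fun w => norm2 (Mn (block X 0 n w) th - M th) <= e)]].

Definition epsM_unif (n : nat) (delta : R) : \bar R :=
  ereal_inf [set e%:E | e in [set e : R |
    wp_atleast (1 - delta)
      (fun w => forall th, ball2 Om r ts th ->
                  norm2 (Mn (block X 0 n w) th - M th) <= e)]].

Fixpoint em_iter (n : nat) (th0 : 'rV[R]_d) (t : nat) (w : T) : 'rV[R]_d :=
  match t with
  | 0 => th0
  | t'.+1 => Mn (block X 0 n w) (em_iter n th0 t' w)
  end.

(* sample-splitting iterates: step t+1 uses block number t+1 (of size m) *)
Fixpoint em_split_iter (m : nat) (th0 : 'rV[R]_d) (t : nat) (w : T) : 'rV[R]_d :=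
  match t with
  | 0 => th0
  | t'.+1 => Mn (block X (t' * m) m w) (em_split_iter m th0 t' w)
  end.
End Sampling.
End EMDefs.

(* Both bounds rest on one deterministic fact: if every iterate lies within e
   of the population update M of its predecessor, the contraction of M keeps
   the iterates in the ball (e + kappa r <= r) and yields
   |theta^t - theta*| <= kappa^t |theta^0 - theta*| + e / (1 - kappa).
   For (a) this is applied on the single event where the uniform deviation
   bound holds.  For (b) the t-th iterate is a measurable function of the
   first t blocks of samples, which are independent of block t + 1; hence,
   by Fubini, a step fails with probability at most delta / T, and a union
   bound over the T steps concludes.  In both parts the infimum defining eps
   is attained: the limit superior of the events for e = eps + 1/(k+1) has
   probability at least 1 - delta. *)

From HB Require Import structures.
From mathcomp Require Import all_boot all_order all_algebra.
From mathcomp Require Import all_classical all_reals all_analysis.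
From mathcomp Require Import measurable_realfun ring lra.
Set Implicit Arguments. Unset Strict Implicit. Unset Printing Implicit Defensive.
Import Order.TTheory GRing.Theory Num.Theory.
Import numFieldNormedType.Exports.
Local Open Scope classical_set_scope.
Local Open Scope ring_scope.

Section EuclideanNorm.
Variables (R : realType) (d : nat).
Implicit Types u v : 'rV[R]_d.

Lemma norm2_ge0 v : 0 <= norm2 v.
Proof. exact: sqrtr_ge0. Qed.

Lemma norm2_sqr v : norm2 v ^+ 2 = \sum_(i < d) v ord0 i ^+ 2.
Proof. by rewrite sqr_sqrtr // sumr_ge0 // => i _; exact: sqr_ge0. Qed.

Lemma norm2_eq0 v : norm2 v = 0 -> v = 0.
Proof.
move=> v0; apply/rowP => i; rewrite mxE; apply/eqP; rewrite -sqrf_eq0.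
have /eqP : \sum_(j < d) v ord0 j ^+ 2 = 0 by rewrite -norm2_sqr v0 expr0n.
rewrite psumr_eq0 => [/allP/(_ i (mem_index_enum i))//|j _]; exact: sqr_ge0.
Qed.

Lemma sum_mul_le_norm2 u v :
  \sum_(i < d) u ord0 i * v ord0 i <= norm2 u * norm2 v.
Proof.
set a := norm2 u; set b := norm2 v.
have [a0|a_neq0] := eqVneq a 0.
  by rewrite a0 mul0r big1 // => i _; rewrite (norm2_eq0 a0) mxE mul0r.
have [b0|b_neq0] := eqVneq b 0.
  by rewrite b0 mulr0 big1 // => i _; rewrite (norm2_eq0 b0) mxE mulr0.
have ab_gt0 : 0 < a * b by rewrite mulr_gt0 // lt0r ?a_neq0 ?b_neq0 ?norm2_ge0.
have key : 2 * (a * b) * \sum_(i < d) u ord0 i * v ord0 i <=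
    b ^+ 2 * \sum_(i < d) u ord0 i ^+ 2 + a ^+ 2 * \sum_(i < d) v ord0 i ^+ 2.
  rewrite !mulr_sumr -big_split /=; apply: ler_sum => i _.
  have := sqr_ge0 (b * u ord0 i - a * v ord0 i); nra.
move: key; rewrite -!norm2_sqr -/a -/b => key.
rewrite -(ler_pM2l (_ : 0 < 2 * (a * b))); last by rewrite mulr_gt0.
nra.
Qed.

Lemma norm2D u v : norm2 (u + v) <= norm2 u + norm2 v.
Proof.
have := norm2_ge0 u; have := norm2_ge0 v => u0 v0.
rewrite -(ler_pXn2r (_ : (0 < 2)%N)) ?nnegrE ?addr_ge0 ?norm2_ge0 //.
rewrite sqrrD !norm2_sqr.
have -> : \sum_(i < d) (u + v) ord0 i ^+ 2 = \sum_(i < d) u ord0 i ^+ 2 +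
    \sum_(i < d) v ord0 i ^+ 2 + 2 * \sum_(i < d) u ord0 i * v ord0 i.
  rewrite mulr_sumr -!big_split /=; apply: eq_bigr => i _; rewrite !mxE; ring.
have := sum_mul_le_norm2 u v; lra.
Qed.

Lemma norm2_sub_le u v w : norm2 (u - w) <= norm2 (u - v) + norm2 (v - w).
Proof. by have := norm2D (u - v) (v - w); rewrite addrA subrK. Qed.

End EuclideanNorm.

Section PerturbedContraction.
Variables (R : realType) (d : nat) (Om : set 'rV[R]_d) (r kappa e : R).
Variables (ts : 'rV[R]_d) (M : 'rV[R]_d -> 'rV[R]_d).
Hypothesis kappa01 : 0 < kappa < 1.
Hypothesis M_contraction :
  forall th, ball2 Om r ts th -> norm2 (M th - ts) <= kappa * norm2 (th - ts).

Lemma perturbed_step th th' : ball2 Om r ts th -> norm2 (th' - M th) <= e ->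
  norm2 (th' - ts) <= e + kappa * norm2 (th - ts).
Proof.
move=> bth near_M; apply: le_trans (norm2_sub_le _ (M th) _) _.
exact: lerD near_M (M_contraction bth).
Qed.

Hypotheses (e_ge0 : 0 <= e) (e_small : e <= (1 - kappa) * r).

(* The ball is invariant since e + kappa r <= r, and e / (1 - kappa) is the
   fixed point of the recursion b |-> e + kappa b. *)
Lemma perturbed_iterates (x : nat -> 'rV[R]_d) (T : nat) :
  ball2 Om r ts (x 0%N) ->
  (forall t, (t < T)%N -> ball2 Om r ts (x t) ->
     Om (x t.+1) /\ norm2 (x t.+1 - M (x t)) <= e) ->
  forall t, (t <= T)%N -> ball2 Om r ts (x t) /\
    norm2 (x t - ts) <= kappa ^+ t * norm2 (x 0%N - ts) + e / (1 - kappa).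
Proof.
case/andP: kappa01 => k0 k1 bx0 good_step.
have k1' : 0 < 1 - kappa by rewrite subr_gt0.
elim=> [_|t IH tT].
  by split=> //; rewrite expr0 mul1r lerDl divr_ge0 ?(ltW k1').
have [[Omt normt] bound_t] := IH (ltnW tT).
have [Omt1 near_M] := good_step t tT (conj Omt normt).
have step := perturbed_step (conj Omt normt) near_M.
split.
  split=> //; apply: le_trans step _.
  have := ler_wpM2l (ltW k0) normt.
  move: e_small; rewrite mulrBl mul1r; lra.
apply: le_trans step _; rewrite exprS -mulrA.
have -> : kappa * (kappa ^+ t * norm2 (x 0%N - ts)) + e / (1 - kappa) =
    e + kappa * (kappa ^+ t * norm2 (x 0%N - ts) + e / (1 - kappa)).
  by field; rewrite lt0r_neq0.
by rewrite lerD2l ler_pM2l.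
Qed.

End PerturbedContraction.

Section WithProbabilityAtLeast.
Variables (R : realType) (dT : measure_display) (T : measurableType dT).
Variable P : probability T R.

Lemma wp_atleast_mono p (E F : T -> Prop) :
  (forall w, E w -> F w) -> wp_atleast P p E -> wp_atleast P p F.
Proof. by move=> EF [A [mA [pA AE]]]; exists A; split => //; split => // w /AE/EF. Qed.

Lemma wp_atleast_witness p (E : T -> Prop) :
  0 < p -> wp_atleast P p E -> exists w, E w.
Proof.
move=> p0 [A [mA [pA AE]]]; have /set0P[w Aw] : A != set0.
  by apply/eqP => A0; move: pA; rewrite A0 measure0 lee_fin; lra.
by exists w; exact: AE.
Qed.

Lemma prob_setC_le (A : set T) (c : R) : measurable A ->
  (P (~` A) <= c%:E)%E = ((1 - c)%:E <= P A)%E.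
Proof.
move=> mA; rewrite probability_setC // -(fineK (fin_num_measure P _ mA)).
by rewrite -[(1 - _)%E]/((1 - _)%:E) !lee_fin lerBlDr addrC -lerBlDr.
Qed.

Lemma wp_atleast_setC (E : T -> Prop) (B : set T) (c : R) :
  measurable B -> (P B <= c%:E)%E -> (forall w, ~ B w -> E w) ->
  wp_atleast P (1 - c) E.
Proof.
move=> mB PB nBE; exists (~` B); split; first exact: measurableC.
split; last exact: nBE.
by rewrite -prob_setC_le; [rewrite setCK | exact: measurableC].
Qed.

Lemma prob_le_wp_atleast (E : T -> Prop) (B : set T) (c : R) :
  wp_atleast P (1 - c) E -> measurable B -> (forall w, B w -> ~ E w) ->
  (P B <= c%:E)%E.
Proof.
move=> [A [mA [pA AE]]] mB BnE.
have BAC : B `<=` ~` A by move=> w /BnE nE /AE.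
apply: le_trans (le_measure _ _ _ BAC) _; rewrite ?inE //; first exact: measurableC.
by rewrite prob_setC_le.
Qed.

(* The events for e = e0 + 1/(k+1) are chosen separately, so one passes to
   their limit superior, whose probability is a decreasing limit. *)
Lemma wp_atleast_inf p (E : R -> T -> Prop) (e0 : R) :
  (forall e e' w, e <= e' -> E e w -> E e' w) ->
  (forall w, (forall e, e0 < e -> E e w) -> E e0 w) ->
  (forall e, e0 < e -> wp_atleast P p (E e)) ->
  wp_atleast P p (E e0).
Proof.
move=> E_mono E_closed wpE.
have /choice[A HA] : forall k : nat, exists A, measurable A /\
    (p%:E <= P A)%E /\ forall w, A w -> E (e0 + k.+1%:R^-1) w.
  by move=> k; apply: wpE; rewrite ltrDl invr_gt0 ltr0n.
have mA k : measurable (A k) by case: (HA k).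
pose D N := \bigcup_k A (k + N)%N.
have mD N : measurable (D N) by apply: bigcupT_measurable => k; exact: mA.
have pD N : (p%:E <= P (D N))%E.
  apply: le_trans (proj1 (proj2 (HA N))) _; apply: le_measure; rewrite ?inE //.
  by move=> w Aw; exists 0%N.
have D_decr : nonincreasing_seq D.
  apply/nonincreasing_seqP => N; apply/subsetPset => w [k _ Akw].
  by exists k.+1 => //; rewrite addSnnS.
have mlimD : measurable (\bigcap_N D N) by exact: bigcapT_measurable.
have D0_fin : (P (D 0%N) < +oo)%E by rewrite ltey_eq fin_num_measure.
have cvgD := nonincreasing_cvg_mu D0_fin mD mlimD D_decr.
exists (\bigcap_N D N); split => //; split.
  rewrite -(cvg_lim _ cvgD) //; apply: lime_ge; last exact: nearW.
  by apply/cvg_ex; eexists; exact: cvgD.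
move=> w Dw; apply: E_closed => e e0e.
have [N N_lt] := ltr_add_invr e0e.
have [k _ Akw] := Dw N I.
apply: E_mono (proj2 (proj2 (HA (k + N)%N)) w Akw).
apply/ltW/(le_lt_trans _ N_lt); rewrite lerD2l lef_pV2 ?posrE //.
by rewrite ler_nat ltnS leq_addl.
Qed.

End WithProbabilityAtLeast.

Lemma ereal_inf_EFin (R : realType) (Q : R -> Prop) (c : R) :
  (forall e, Q e -> 0 <= e) -> (ereal_inf [set e%:E | e in Q] <= c%:E)%E ->
  exists es : R, [/\ ereal_inf [set e%:E | e in Q] = es%:E, 0 <= es, es <= c &
    forall e, es < e -> exists2 e', Q e' & e' < e].
Proof.
move=> Q_ge0 infQ_le.
have infQ_ge0 : (0%:E <= ereal_inf [set e%:E | e in Q])%E.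
  by apply: le_ereal_inf_tmp => _ [e Qe <-]; rewrite lee_fin; exact: Q_ge0.
have infQ_fin : ereal_inf [set e%:E | e in Q] \is a fin_num.
  by rewrite ge0_fin_numE // (le_lt_trans infQ_le) ?ltry.
exists (fine (ereal_inf [set e%:E | e in Q])); rewrite fineK //.
split=> //; rewrite -?lee_fin ?fineK // => e es_lt.
have /ereal_inf_lt[_ [e' Qe' <-]] : (ereal_inf [set e%:E | e in Q] < e%:E)%E.
  by rewrite -(fineK infQ_fin) lte_fin.
by rewrite lte_fin; exists e'.
Qed.
Section TupleBoxes.
Variables (R : realType) (dY : measure_display) (Y : measurableType dY) (n : nat).

Definition box (A : 'I_n -> set Y) : set (n.-tuple Y) :=
  [set x | forall i, A i (tnth x i)].

Definition boxes : set (set (n.-tuple Y)) :=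
  [set box A | A in [set A | forall i, measurable (A i)]].

Lemma measurable_box A : (forall i, measurable (A i)) -> measurable (box A).
Proof.
move=> mA; have -> : box A = \bigcap_(i in [set: 'I_n])
    (setT `&` (fun x : n.-tuple Y => tnth x i) @^-1` A i).
  by apply/seteqP; split=> [x Ax i _|x Ax i]; [split=> //; exact: Ax | case: (Ax i I)].
apply: fin_bigcap_measurable => [|i _]; first exact: finite_finset.
exact: measurable_tnth.
Qed.

Lemma measurable_tupleE : (measurable : set (set (n.-tuple Y))) = <<s boxes >>.
Proof.
apply/seteqP; split.
  apply: smallest_sub; first exact: smallest_sigma_algebra.
  move=> S; rewrite -bigcup_seq => -[i _ [B mB <-]]; apply: sub_sigma_algebra.
  exists (fun j => if j == i then B else setT) => [j|]; first by case: ifP.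
  apply/seteqP; split=> [x /(_ i)|x [_ Bx] j /=]; first by rewrite eqxx.
  by case: ifP => // /eqP ->.
apply: smallest_sub; first exact: sigma_algebra_measurable.
by move=> _ [A mA <-]; exact: measurable_box.
Qed.

Lemma setI_closed_boxes : setI_closed boxes.
Proof.
move=> _ _ [A mA <-] [B mB <-]; exists (fun i => A i `&` B i).
  by move=> i; exact: measurableI.
by apply/seteqP; split=> [x AB|x [Ax Bx] i]; [split=> i; case: (AB i) | split].
Qed.

Lemma measure_tuple_unique (m1 m2 : {measure set (n.-tuple Y) -> \bar R}) :
  (forall A, (forall i, measurable (A i)) -> m1 (box A) = m2 (box A)) ->
  (m1 setT < +oo)%E -> forall S, measurable S -> m1 S = m2 S.
Proof.
move=> m12 m1_fin S mS.
apply: (measure_unique boxes (fun _ => setT) measurable_tupleE setI_closed_boxes) => //.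
- by move=> _; exists (fun _ => setT) => //; apply/seteqP.
- by rewrite bigcup_const.
- by move=> _ [A mA <-]; exact: m12.
Qed.

End TupleBoxes.

Section IidBlocks.
Variables (R : realType) (dT dY : measure_display).
Variables (T : measurableType dT) (Y : measurableType dY).
Variables (P : probability T R) (X : nat -> T -> Y).
Hypothesis mX : forall i, measurable_fun setT (X i).
Hypothesis X_ident : forall i A, measurable A -> P (X i @^-1` A) = P (X 0 @^-1` A).
Hypothesis X_indep : forall n (A : 'I_n -> set Y), (forall i, measurable (A i)) ->
  P (\bigcap_(i in [set: 'I_n]) (X i @^-1` A i)) =
  (\prod_(i < n) fine (P (X i @^-1` A i)))%:E.

Lemma measurable_block s m : measurable_fun setT (block X s m).
Proof.
apply/measurable_fun_tnthP => i.
have -> : (fun b : m.-tuple Y => tnth b i) \o block X s m = X (s + i)%N.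
  by apply/funext => w /=; rewrite tnth_mktuple.
exact: mX.
Qed.

Lemma measurable_block_preimage s m B :
  measurable B -> measurable (block X s m @^-1` B).
Proof. by move=> mB; rewrite -[X in measurable X]setTI; exact: measurable_block. Qed.

(* Two consecutive blocks are read off one block of length s + m. *)
Lemma prob_blocks_box s m (A : 'I_s -> set Y) (B : 'I_m -> set Y) :
  (forall i, measurable (A i)) -> (forall i, measurable (B i)) ->
  P (block X 0 s @^-1` box A `&` block X s m @^-1` box B) =
  ((\prod_(i < s) fine (P (X 0 @^-1` A i))) *
   \prod_(i < m) fine (P (X 0 @^-1` B i)))%:E.
Proof.
move=> mA mB.
pose C j := match fintype.split j with inl i => A i | inr k => B k end.
have splitl i : fintype.split (lshift m i) = inl i by exact: (unsplitK (inl _ i)).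
have splitr k : fintype.split (rshift s k) = inr k by exact: (unsplitK (inr _ k)).
have -> : block X 0 s @^-1` box A `&` block X s m @^-1` box B =
    \bigcap_(j in [set: 'I_(s + m)]) (X j @^-1` C j).
  apply/seteqP; split=> w.
    move=> [/= Aw Bw] j _; rewrite /C; case: splitP => [i ->|k ->].
      by have := Aw i; rewrite tnth_mktuple add0n.
    by have := Bw k; rewrite tnth_mktuple.
  move=> Cw; split=> [i|k] /=; rewrite tnth_mktuple.
    by have := Cw (lshift m i) I; rewrite /C splitl add0n.
  by have := Cw (rshift s k) I; rewrite /C splitr.
rewrite X_indep => [|j]; last by rewrite /C; case: (fintype.split j).
rewrite big_split_ord /=; congr (_ * _)%:E; apply: eq_bigr => i _.
  by rewrite /C splitl X_ident.
by rewrite /C splitr X_ident.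
Qed.

Lemma prob_block_box s m (B : 'I_m -> set Y) : (forall i, measurable (B i)) ->
  P (block X s m @^-1` box B) = (\prod_(i < m) fine (P (X 0 @^-1` B i)))%:E.
Proof.
move=> mB; have := prob_blocks_box (fun _ : 'I_s => measurableT) mB.
have -> : box (fun _ : 'I_s => @setT Y) = setT by apply/seteqP.
rewrite preimage_setT setTI => ->; rewrite big1 ?mul1r // => i _.
by rewrite preimage_setT probability_setT.
Qed.

Let image_measure (mu : {measure set T -> \bar R}) s m :
  {measure set (m.-tuple Y) -> \bar R} :=
  measure_function_pushforward__canonical__measure_function_Measure mu
    (@measurable_block s m).

Lemma prob_block_shift s m B : measurable B ->
  P (block X s m @^-1` B) = P (block X 0 m @^-1` B).
Proof.
move=> mB; apply: (measure_tuple_unique (m1 := image_measure P s m)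
  (m2 := image_measure P 0 m)) => // [Bi mBi|].
  by rewrite /= /pushforward !prob_block_box.
by rewrite /= /pushforward ltey_eq fin_num_measure //; exact: measurable_block_preimage.
Qed.

(* Boxes form a pi-system generating the tuple sigma-algebra. *)
Lemma prob_blockI_from_boxes s m D : measurable D ->
  (forall A, (forall i, measurable (A i)) ->
     P (block X s m @^-1` box A `&` D) = (P (block X s m @^-1` box A) * P D)%E) ->
  forall B, measurable B ->
     P (block X s m @^-1` B `&` D) = (P (block X s m @^-1` B) * P D)%E.
Proof.
move=> mD boxD B mB.
have PD0 : 0 <= fine (P D) by exact: fine_ge0.
have PD_fin : P D \is a fin_num by exact: fin_num_measure.
rewrite -[P D]fineK // muleC.
apply: (measure_tuple_unique (m1 := image_measure (mrestr P mD) s m)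
  (m2 := mscale (NngNum PD0) (image_measure P s m))) => // [A mA|].
  by rewrite /= /mscale /mrestr /pushforward boxD // fineK // muleC.
rewrite /= /mrestr /pushforward ltey_eq fin_num_measure //.
by apply: measurableI => //; exact: measurable_block_preimage.
Qed.

Lemma blocks_independent s m A B : measurable A -> measurable B ->
  P (block X 0 s @^-1` A `&` block X s m @^-1` B) =
  (P (block X 0 s @^-1` A) * P (block X s m @^-1` B))%E.
Proof.
move=> mA mB; rewrite setIC muleC.
apply: prob_blockI_from_boxes => // [|Bi mBi]; first exact: measurable_block_preimage.
rewrite setIC muleC; apply: prob_blockI_from_boxes => // [|Ai mAi].
  by apply: measurable_block_preimage; exact: measurable_box.
by rewrite prob_blocks_box // !prob_block_box // -EFinM.
Qed.

Let block_mfun s m : {mfun T >-> m.-tuple Y} :=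
  MeasurableFun.Pack (MeasurableFun.Class
    (isMeasurableFun.Build _ _ _ _ _ (@measurable_block s m))).

(* By independence the joint law of the two blocks is the product of their
   laws, so its mass on S is the average of the masses of the sections. *)
Lemma prob_blocks_le_sections s m (S : set (s.-tuple Y * m.-tuple Y)) (c : R) :
  measurable S -> (forall a, (P (block X 0 m @^-1` xsection S a) <= c%:E)%E) ->
  (P ((fun w => (block X 0 s w, block X s m w)) @^-1` S) <= c%:E)%E.
Proof.
move=> mS sectionS.
have mpair : measurable_fun setT (fun w => (block X 0 s w, block X s m w)).
  exact: measurable_fun_pair (@measurable_block 0 s) (@measurable_block s m).
pose mu1 := distribution P (block_mfun 0 s).
pose mu2 := distribution P (block_mfun s m).
have <- : product_measure1 mu1 mu2 S =
    P ((fun w => (block X 0 s w, block X s m w)) @^-1` S).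
  apply: (@product_measure_unique _ _ _ _ _ mu1 mu2
    (measure_function_pushforward__canonical__measure_function_Measure P mpair) _ S mS).
  by move=> A B mA mB; exact: blocks_independent.
have -> : c%:E = (\int[mu1]_a (cst c%:E) a)%E.
  rewrite integral_cst // -[LHS]mule1; congr (_ * _)%E.
  exact/esym/(probability_setT P).
apply: ge0_le_integral => //; first exact: measurable_fun_xsection.
move=> a _; rewrite /mu2 /distribution /pushforward /= prob_block_shift //.
exact: measurable_xsection.
Qed.

End IidBlocks.

Section ParameterMeasurability.
Variables (R : realType) (d : nat) (dU : measure_display) (U : measurableType dU).

Lemma rv2tK : cancel (@rv2t R d) (@t2rv R d).
Proof. by move=> v; apply/rowP => i; rewrite mxE tnth_mktuple. Qed.

Lemma measurable_norm2_sub (f g : U -> 'rV[R]_d) :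
  measurable_fun setT (fun u => rv2t (f u)) ->
  measurable_fun setT (fun u => rv2t (g u)) ->
  measurable_fun setT (fun u => norm2 (f u - g u)).
Proof.
move=> mf mg; apply: measurableT_comp (continuous_measurable_fun (@sqrt_continuous R)) _.
apply: measurable_sum => i; apply: measurable_funX.
rewrite [X in measurable_fun _ X](_ : _ =
  (fun u => tnth (rv2t (f u)) i - tnth (rv2t (g u)) i)).
  by apply: measurable_funB; exact: measurableT_comp (measurable_tnth i) _.
by apply/funext => u /=; rewrite !tnth_mktuple !mxE.
Qed.

Lemma measurable_set_bool (b : U -> bool) :
  measurable_fun setT b -> measurable [set u | b u].
Proof. by move=> mb; have := mb measurableT [set true] I; rewrite setTI. Qed.

End ParameterMeasurability.

Section SplitIterates.
Variables (R : realType) (d : nat) (dY : measure_display) (Y : measurableType dY).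
Variables (Mn : forall m, m.-tuple Y -> 'rV[R]_d -> 'rV[R]_d) (m : nat).
Variable th0 : 'rV[R]_d.

Fixpoint split_iter (x : nat -> Y) (t : nat) : 'rV[R]_d :=
  if t is t'.+1 then Mn [tuple x (t' * m + i)%N | i < m] (split_iter x t')
  else th0.

Lemma em_split_iterE dT (T : measurableType dT) (X : nat -> T -> Y) t w :
  em_split_iter X Mn m th0 t w = split_iter (X ^~ w) t.
Proof. by elim: t => //= t ->. Qed.

Lemma split_iter_prefix (x x' : nat -> Y) t :
  (forall i, (i < t * m)%N -> x i = x' i) -> split_iter x t = split_iter x' t.
Proof.
elim: t => [//|t IH] xx' /=.
rewrite IH => [|i lti]; last by apply: xx'; rewrite mulSn (leq_trans lti) ?leq_addl.
congr Mn; apply: eq_from_tnth => i; rewrite !tnth_mktuple xx' //.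
by rewrite mulSn addnC ltn_add2r.
Qed.

Lemma split_iter_in (Om : set 'rV[R]_d) x t :
  (forall (ys : m.-tuple Y) th, Om th -> Om (Mn ys th)) -> Om th0 ->
  Om (split_iter x t).
Proof. by move=> Mn_in Om0; elim: t => //= t; exact: Mn_in. Qed.

Lemma measurable_nth N k (y0 : Y) :
  measurable_fun setT (fun a : N.-tuple Y => nth y0 a k).
Proof.
case: (ltnP k N) => [ltkN|leNk].
  rewrite (_ : (fun a => _) = fun a => tnth a (Ordinal ltkN)).
    exact: measurable_tnth.
  by apply/funext => a; rewrite (tnth_nth y0).
rewrite (_ : (fun a => _) = cst y0); first exact: measurable_cst.
by apply/funext => a; rewrite nth_default // size_tuple.
Qed.

Hypothesis mMn : measurable_fun [set: m.-tuple Y * d.-tuple R]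
  (fun p => rv2t (Mn p.1 (t2rv p.2))).

Lemma measurable_split_iter N t (y0 : Y) :
  measurable_fun setT (fun a : N.-tuple Y => rv2t (split_iter (nth y0 a) t)).
Proof.
elim: t => [|t IH] /=; first exact: measurable_cst.
pose next_block (a : N.-tuple Y) := [tuple nth y0 a (t * m + i) | i < m].
have mnext : measurable_fun setT next_block.
  apply/measurable_fun_tnthP => i.
  rewrite (_ : (fun b => tnth b i) \o next_block = fun a => nth y0 a (t * m + i)).
    exact: measurable_nth.
  by apply/funext => a /=; rewrite tnth_mktuple.
rewrite (_ : (fun a => _) = (fun p => rv2t (Mn p.1 (t2rv p.2))) \o
    (fun a => (next_block a, rv2t (split_iter (nth y0 a) t)))).
  exact: measurableT_comp mMn (measurable_fun_pair mnext IH).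
by apply/funext => a /=; rewrite rv2tK.
Qed.

End SplitIterates.

Section SampleSplitting.
Variables (R : realType) (d : nat) (dT dY : measure_display).
Variables (T : measurableType dT) (Y : measurableType dY).
Variables (P : probability T R) (X : nat -> T -> Y).
Hypothesis mX : forall i, measurable_fun setT (X i).
Hypothesis X_ident : forall i A, measurable A -> P (X i @^-1` A) = P (X 0 @^-1` A).
Hypothesis X_indep : forall n (A : 'I_n -> set Y), (forall i, measurable (A i)) ->
  P (\bigcap_(i in [set: 'I_n]) (X i @^-1` A i)) =
  (\prod_(i < n) fine (P (X i @^-1` A i)))%:E.
Variables (Om : set 'rV[R]_d) (r : R) (ts : 'rV[R]_d) (M : 'rV[R]_d -> 'rV[R]_d).
Variables (Mn : forall m, m.-tuple Y -> 'rV[R]_d -> 'rV[R]_d) (m : nat).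
Variables (th0 : 'rV[R]_d) (es dl : R).
Hypothesis Mn_in : forall (ys : m.-tuple Y) th, Om th -> Om (Mn ys th).
Hypotheses (Om_th0 : Om th0) (dl_ge0 : 0 <= dl).
Hypothesis mM : measurable_fun [set: d.-tuple R] (fun t => rv2t (M (t2rv t))).
Hypothesis mMn : measurable_fun [set: m.-tuple Y * d.-tuple R]
  (fun p => rv2t (Mn p.1 (t2rv p.2))).

Lemma measurable_fresh_step_far th :
  measurable [set b : m.-tuple Y | (es < norm2 (Mn b th - M th))%R].
Proof.
apply: measurable_set_bool; apply: measurable_fun_ltr; first exact: measurable_cst.
apply: (measurable_norm2_sub (g := fun=> M th)); last exact: measurable_cst.
rewrite (_ : (fun b => _) =
    (fun q => rv2t (Mn q.1 (t2rv q.2))) \o (fun b => (b, rv2t th))).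
  apply: measurableT_comp; first exact: mMn.
  by apply/measurable_fun_pairP; split; [exact: measurable_id | exact: measurable_cst].
by apply/funext => b /=; rewrite rv2tK.
Qed.

Hypothesis fresh_step_le : forall th, ball2 Om r ts th ->
  (P (block X 0 m @^-1` [set b : m.-tuple Y | (es < norm2 (Mn b th - M th))%R])
   <= dl%:E)%E.

Let x t w := em_split_iter X Mn m th0 t w.

Let bad_step t : set T := [set w | (norm2 (x t w - ts) <= r) &&
  (es < norm2 (x t.+1 w - M (x t w)))].

Let past t (a : (t * m).-tuple Y) := split_iter Mn m th0 (nth point a) t.

Let bad_pair t : set ((t * m).-tuple Y * m.-tuple Y) := [set p |
  (norm2 (past p.1 - ts) <= r) && (es < norm2 (Mn p.2 (past p.1) - M (past p.1)))].

Arguments bad_pair : clear implicits.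

Let measurable_past t :
  measurable_fun setT (fun p : (t * m).-tuple Y * m.-tuple Y => rv2t (past p.1)).
Proof.
exact: (measurableT_comp (f := fun a => rv2t (past a)) (g := fst))
  (measurable_split_iter th0 mMn t point) measurable_fst.
Qed.

Let measurable_bad_pair t : measurable (bad_pair t).
Proof.
apply: measurable_set_bool; apply: measurable_and.
  apply: measurable_fun_ler; last exact: measurable_cst.
  apply: (measurable_norm2_sub (f := fun p => past p.1) (g := fun=> ts)).
    exact: measurable_past.
  exact: measurable_cst.
apply: measurable_fun_ltr; first exact: measurable_cst.
apply: (measurable_norm2_sub (f := fun p => Mn p.2 (past p.1))
  (g := fun p => M (past p.1))).
  rewrite (_ : (fun p => _) = (fun q => rv2t (Mn q.1 (t2rv q.2))) \o
      (fun p => (p.2, rv2t (past p.1)))); last by apply/funext => p /=; rewrite rv2tK.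
  apply: measurableT_comp; first exact: mMn.
  by apply/measurable_fun_pairP; split; [exact: measurable_snd | exact: measurable_past].
rewrite (_ : (fun p => _) = (fun v => rv2t (M (t2rv v))) \o (fun p => rv2t (past p.1))).
  by apply: measurableT_comp; [exact: mM | exact: measurable_past].
by apply/funext => p /=; rewrite rv2tK.
Qed.

(* The first t blocks determine the t-th iterate; block t + 1 is fresh. *)
Let bad_stepE t : bad_step t =
  (fun w => (block X 0 (t * m) w, block X (t * m) m w)) @^-1` bad_pair t.
Proof.
have pastE w : past (block X 0 (t * m) w) = x t w.
  rewrite /past /x em_split_iterE; apply: split_iter_prefix => i lti.
  by rewrite -[i]/(nat_of_ord (Ordinal lti)) nth_mktuple add0n.
by apply/seteqP; split=> w; rewrite /bad_step /bad_pair /= pastE.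
Qed.

Lemma measurable_bad_step t : measurable (bad_step t).
Proof.
rewrite bad_stepE -[X in measurable X]setTI.
have := measurable_fun_pair (measurable_block mX 0 (m := t * m))
  (measurable_block mX (t * m) (m := m)).
by apply; [exact: measurableT | exact: measurable_bad_pair].
Qed.

Lemma prob_bad_step_le t : (P (bad_step t) <= dl%:E)%E.
Proof.
rewrite bad_stepE.
apply: (prob_blocks_le_sections mX X_ident X_indep (@measurable_bad_pair t)) => a.
have [near|far] := boolP (norm2 (past a - ts) <= r).
  rewrite (_ : xsection _ _ = [set b | (es < norm2 (Mn b (past a) - M (past a)))%R]).
    by apply: fresh_step_le; split=> //; exact: split_iter_in.
  by apply/seteqP; split=> b; rewrite /xsection /= inE /bad_pair /= near.
rewrite (_ : xsection _ _ = set0) ?preimage_set0 ?measure0 ?lee_fin //.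
by apply/seteqP; split=> // b; rewrite /xsection /= inE /bad_pair /= (negbTE far).
Qed.

Lemma wp_split_steps_close (n : nat) :
  wp_atleast P (1 - n%:R * dl) (fun w => forall t, (t < n)%N ->
    ball2 Om r ts (x t w) -> norm2 (x t.+1 w - M (x t w)) <= es).
Proof.
pose bad := \big[setU/set0]_(t < n) bad_step t.
have mbad : measurable bad.
  by apply: bigsetU_measurable => t _; exact: measurable_bad_step.
apply: (wp_atleast_setC mbad).
  have := @content_subadditive _ _ _ P bad bad_step n
    (fun k _ => measurable_bad_step k) mbad (@subset_refl _ bad).
  move=> /le_trans; apply.
  rewrite (_ : (n%:R * dl)%:E = (\sum_(k < n) dl%:E)%E).
    by apply: lee_sum => k _; exact: prob_bad_step_le.
  by rewrite sumEFin sumr_const card_ord mulr_natl.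
move=> w not_bad t ltn [_ near]; rewrite leNgt; apply/negP => far.
apply: not_bad; rewrite /bad -bigcup_seq; exists (Ordinal ltn).
  by rewrite /= mem_index_enum.
by rewrite /bad_step /= near.
Qed.

End SampleSplitting.

Section EMBounds.
Local Unset Implicit Arguments.
Variables (R : realType) (d : nat) (dT dY : measure_display).
Variables (T : measurableType dT) (Y : measurableType dY).
Variables (P : probability T R) (X : nat -> T -> Y).
Variables (Om : set 'rV[R]_d) (r : R) (ts : 'rV[R]_d) (M : 'rV[R]_d -> 'rV[R]_d).
Variables (Mn : forall m, m.-tuple Y -> 'rV[R]_d -> 'rV[R]_d).
Variables (kappa delta : R) (th0 : 'rV[R]_d).
Hypothesis Mn_in : forall m (ys : m.-tuple Y) th, Om th -> Om (Mn m ys th).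
Hypothesis kappa01 : 0 < kappa < 1.
Hypothesis M_contraction :
  forall th, ball2 Om r ts th -> norm2 (M th - ts) <= kappa * norm2 (th - ts).
Hypothesis th0_ball : ball2 Om r ts th0.

Lemma affine_bound_EFin (t : nat) (es x : R) :
  x <= kappa ^+ t * norm2 (th0 - ts) + es / (1 - kappa) ->
  (x%:E <= (kappa ^+ t * norm2 (th0 - ts))%:E + ((1 - kappa)^-1)%:E * es%:E)%E.
Proof. by rewrite -EFinM -EFinD lee_fin [_^-1 * _]mulrC. Qed.

Lemma em_iter_bound n : 0 < delta < 1 ->
  (epsM_unif P X Om r ts M Mn n delta <= ((1 - kappa) * r)%:E)%E ->
  wp_atleast P (1 - delta) (fun w => forall t : nat,
    ((norm2 (em_iter X Mn n th0 t w - ts))%:E <=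
     (kappa ^+ t * norm2 (th0 - ts))%:E
     + ((1 - kappa)^-1)%:E * epsM_unif P X Om r ts M Mn n delta)%E).
Proof.
case/andP=> delta0 delta1 eps_le.
pose E e w := forall th, ball2 Om r ts th ->
  norm2 (Mn n (block X 0 n w) th - M th) <= e.
have E_ge0 e : wp_atleast P (1 - delta) (E e) -> 0 <= e.
  case/wp_atleast_witness => [|w /(_ th0 th0_ball)]; first by rewrite subr_gt0.
  exact: le_trans (norm2_ge0 _).
rewrite /epsM_unif; have [es [-> es0 es_le es_inf]] := ereal_inf_EFin E_ge0 eps_le.
have wpE : wp_atleast P (1 - delta) (E es).
  apply: wp_atleast_inf => [e e' w le_ee' Ew th bth|w Ew th bth|].
  - exact: le_trans (Ew th bth) le_ee'.
  - by apply/ler_addgt0Pr => e e0; apply: Ew; rewrite ?ltrDl.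
  move=> e /es_inf[e' wpE' lt_e'e].
  by apply: wp_atleast_mono wpE' => w Ew th bth; exact/ltW/(le_lt_trans (Ew th bth)).
apply: wp_atleast_mono wpE => w Ew t; apply: affine_bound_EFin.
have step s : (s < t)%N -> ball2 Om r ts (em_iter X Mn n th0 s w) ->
    Om (em_iter X Mn n th0 s.+1 w) /\
    norm2 (em_iter X Mn n th0 s.+1 w - M (em_iter X Mn n th0 s w)) <= es.
  by move=> _ bs /=; split; [apply: Mn_in; case: bs | exact: Ew].
by case: (perturbed_iterates kappa01 M_contraction es0 es_le
  (x := em_iter X Mn n th0 ^~ w) th0_ball step (leqnn t)).
Qed.

Hypothesis mX : forall i, measurable_fun setT (X i).
Hypothesis X_ident : forall i A, measurable A -> P (X i @^-1` A) = P (X 0 @^-1` A).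
Hypothesis X_indep : forall n (A : 'I_n -> set Y), (forall i, measurable (A i)) ->
  P (\bigcap_(i in [set: 'I_n]) (X i @^-1` A i)) =
  (\prod_(i < n) fine (P (X i @^-1` A i)))%:E.
Hypothesis mM : measurable_fun [set: d.-tuple R] (fun t => rv2t (M (t2rv t))).
Hypothesis mMn : forall m, measurable_fun [set: m.-tuple Y * d.-tuple R]
  (fun p => rv2t (Mn m p.1 (t2rv p.2))).

Lemma em_split_iter_bound n T' : 0 < delta < 1 -> (0 < T')%N ->
  (epsM P X Om r ts M Mn (n %/ T') (delta / T'%:R) <= ((1 - kappa) * r)%:E)%E ->
  wp_atleast P (1 - delta) (fun w => forall t : nat, (t <= T')%N ->
    ((norm2 (em_split_iter X Mn (n %/ T') th0 t w - ts))%:E <=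
     (kappa ^+ t * norm2 (th0 - ts))%:E
     + ((1 - kappa)^-1)%:E * epsM P X Om r ts M Mn (n %/ T') (delta / T'%:R))%E).
Proof.
case/andP=> delta0 delta1 T'_gt0 eps_le.
set m := (n %/ T')%N; set dl := delta / T'%:R.
have T'_pos : 0 < T'%:R :> R by rewrite ltr0n.
have dl_gt0 : 0 < dl by rewrite divr_gt0.
have T'dl : T'%:R * dl = delta by rewrite mulrC divfK ?lt0r_neq0.
have dl_le : dl <= delta.
  have : 1 <= T'%:R :> R by rewrite ler1n.
  nra.
pose E e th w := norm2 (Mn m (block X 0 m w) th - M th) <= e.
have E_ge0 e : (forall th, ball2 Om r ts th -> wp_atleast P (1 - dl) (E e th)) -> 0 <= e.
  move=> /(_ th0 th0_ball) /wp_atleast_witness[|w].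
    by rewrite subr_gt0 (le_lt_trans dl_le).
  exact: le_trans (norm2_ge0 _).
rewrite /epsM; have [es [-> es0 es_le es_inf]] := ereal_inf_EFin E_ge0 eps_le.
have wpE th : ball2 Om r ts th -> wp_atleast P (1 - dl) (E es th).
  move=> bth; apply: (wp_atleast_inf (E := E ^~ th)) => [e e' w le_ee' Ew|w Ew|].
  - exact: le_trans Ew le_ee'.
  - by apply/ler_addgt0Pr => e e0; apply: Ew; rewrite ltrDl.
  move=> e /es_inf[e' wpE' lt_e'e].
  by apply: wp_atleast_mono (wpE' th bth) => w Ew; exact/ltW/(le_lt_trans Ew).
have fresh th : ball2 Om r ts th ->
    (P (block X 0 m @^-1` [set b | (es < norm2 (Mn m b th - M th))%R]) <= dl%:E)%E.
  move=> bth; apply: prob_le_wp_atleast (wpE th bth) _ _.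
    apply: (measurable_block_preimage mX).
    exact: (measurable_fresh_step_far M es (mMn m) th).
  by move=> w /= lt_es; rewrite /E leNgt lt_es.
have := wp_split_steps_close mX X_ident X_indep (Mn_in m) (proj1 th0_ball)
  (ltW dl_gt0) mM (mMn m) fresh T'.
rewrite T'dl; apply: wp_atleast_mono => w close t le_tT; apply: affine_bound_EFin.
have step s : (s < T')%N -> ball2 Om r ts (em_split_iter X Mn m th0 s w) ->
    Om (em_split_iter X Mn m th0 s.+1 w) /\
    norm2 (em_split_iter X Mn m th0 s.+1 w - M (em_split_iter X Mn m th0 s w)) <= es.
  by move=> lt_sT bs /=; split; [apply: Mn_in; case: bs | exact: close].
by case: (perturbed_iterates kappa01 M_contraction es0 es_le
  (x := em_split_iter X Mn m th0 ^~ w) th0_ball step le_tT).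
Qed.

End EMBounds.

Theorem theorem2 (R : realType) (d : nat)
  (dY dZ dT : measure_display)
  (Y : measurableType dY) (Z : measurableType dZ) (T : measurableType dT)
  (muY : {measure set Y -> \bar R}) (muZ : {measure set Z -> \bar R})
  (f : 'rV[R]_d -> Y -> Z -> R)
  (Om : set 'rV[R]_d) (ts : 'rV[R]_d)
  (P : probability T R) (X : nat -> T -> Y)
  (M : 'rV[R]_d -> 'rV[R]_d)
  (Mn : forall m, m.-tuple Y -> 'rV[R]_d -> 'rV[R]_d)
  (r kappa : R) (th0 : 'rV[R]_d) (delta : R) :
  (* standing assumptions *)
  Om !=set0 -> compact Om -> convex_set Om -> Om ts ->
  is_density_family muY muZ f ->
  iid_with_density P muY (gdens muZ f ts) X ->
  (* M is the population EM operator, M_n the sample EM operator *)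
  (forall th, Om th -> is_argmax Om (fun th' => Qfun muY muZ f ts th' th) (M th)) ->
  (forall m (ys : m.-tuple Y) th, Om th ->
     is_argmax Om (fun th' => Qhat muZ f ys th' th) (Mn m ys th)) ->
  (* regularity (measurability) of the EM operators in (samples, theta) *)
  measurable_fun [set: d.-tuple R] (fun t => rv2t (M (t2rv t))) ->
  (forall m, measurable_fun [set: m.-tuple Y * d.-tuple R]
     (fun p => rv2t (Mn m p.1 (t2rv p.2)))) ->
  (* contractivity and initialization *)
  0 < kappa < 1 ->
  (forall th, ball2 Om r ts th -> norm2 (M th - ts) <= kappa * norm2 (th - ts)) ->
  ball2 Om r ts th0 ->
  0 < delta < 1 ->
  (* (a) *)
  (forall n : nat,
     (epsM_unif P X Om r ts M Mn n delta <= ((1 - kappa) * r)%:E)%E ->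
     wp_atleast P (1 - delta) (fun w => forall t : nat,
       ((norm2 (em_iter X Mn n th0 t w - ts))%:E <=
        (kappa ^+ t * norm2 (th0 - ts))%:E
        + ((1 - kappa)^-1)%:E * epsM_unif P X Om r ts M Mn n delta)%E))
  /\
  (* (b) *)
  (forall n T' : nat, (0 < T')%N -> (T' %| n)%N ->
     (epsM P X Om r ts M Mn (n %/ T') (delta / T'%:R) <= ((1 - kappa) * r)%:E)%E ->
     wp_atleast P (1 - delta) (fun w => forall t : nat, (t <= T')%N ->
       ((norm2 (em_split_iter X Mn (n %/ T') th0 t w - ts))%:E <=
        (kappa ^+ t * norm2 (th0 - ts))%:E
        + ((1 - kappa)^-1)%:E * epsM P X Om r ts M Mn (n %/ T') (delta / T'%:R))%E)).
Proof.
move=> _ _ _ _ _ [mX [X_law X_indep]] _ Mn_argmax mM mMn kappa01 M_contraction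
  th0_ball delta01.
have Mn_in m (ys : m.-tuple Y) th : Om th -> Om (Mn m ys th).
  by move=> /(Mn_argmax m ys th)[].
have X_ident i A : measurable A -> P (X i @^-1` A) = P (X 0 @^-1` A).
  by move=> mA; rewrite !X_law.
split=> [n | n T' T'_gt0 _].
  exact: em_iter_bound Mn_in kappa01 M_contraction th0_ball n delta01.
exact: em_split_iter_bound Mn_in kappa01 M_contraction th0_ball mX X_ident
  X_indep mM mMn n T' delta01 T'_gt0.
Qed.
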